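(* Let $(S,H)$ be a polarized K3 surface with $H^2=2d$, $d>0$ an integer, and let $\tau_d$ be the Hodge isometry of $\widetilde H(S,\mathbb Z)=H^0\oplus H^2\oplus H^4$ induced by the autoequivalence $\mathsf O_d=\mathsf T_{\mathcal O_S}\circ(-\otimes\mathcal O_S(H))$ of $D^b(S)$, i.e. $\tau_d(r,\Delta,s)=(-dr-H\cdot\Delta-s,\ rH+\Delta,\ -r)$. Then for a nonzero integer $n$, one has $\tau_d^{2n}=\mathrm{id}$ if and only if $(d,n)$ is one of $(1,3k)$, $(2,2k)$, $(3,3k)$ for some nonzero integer $k$.
   Context: $\mathsf T_{\mathcal O_S}$ denotes the spherical twist $F\mapsto\mathrm{Cone}(\mathrm{RHom}(\mathcal O_S,F)\otimes\mathcal O_S\to F)$. Elements of $\widetilde H(S,\mathbb Z)$ are written $(r,\Delta,s)$ with $r\in H^0$, $\Delta\in H^2(S,\mathbb Z)$, $s\in H^4$. *)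

From mathcomp Require Import all_boot all_order all_algebra.
Set Implicit Arguments. Unset Strict Implicit. Unset Printing Implicit Defensive.
Import Order.TTheory GRing.Theory Num.Theory.
Local Open Scope ring_scope.

(* E8 Dynkin diagram T_{2,3,5}: chain 0-1-2-3-4-5-6, node 7 attached to node 2. *)
Definition e8adj (a b : nat) : bool :=
  [|| (a.+1 == b) && (b <= 6)%N, (b.+1 == a) && (a <= 6)%N,
      (a == 2%N) && (b == 7%N) | (a == 7%N) && (b == 2%N)].

Definition e8m (a b : nat) : int :=
  if a == b then -2 else if e8adj a b then 1 else 0.

(* Gram matrix of the K3 lattice U^3 (+) E8(-1)^2, indices 0..21:
   0..5 three hyperbolic planes U, 6..13 and 14..21 two copies of E8(-1). *)
Definition k3g (i j : nat) : int :=
  if (i < 6)%N && (j < 6)%N then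
    (if (i./2 == j./2) && (i != j) then 1 else 0)
  else if [&& (6 <= i < 14)%N & (6 <= j < 14)%N] then e8m (i - 6) (j - 6)
  else if (14 <= i)%N && (14 <= j)%N then e8m (i - 14) (j - 14)
  else 0.

(* H^2(S,Z) of a K3 surface, with its intersection form. *)
Definition K3L := 'rV[int]_22.
Definition k3gram : 'M[int]_22 := \matrix_(i < 22, j < 22) k3g i j.
Definition k3form (x y : K3L) : int := (x *m k3gram *m y^T) 0 0.

(* Mukai lattice H^0 (+) H^2 (+) H^4 : elements (r, Delta, s). *)
Definition mukai := (int * K3L * int)%type.

Definition tau (d : nat) (H : K3L) (v : mukai) : mukai :=
  let: (r, D, s) := v in
  (- (d%:Z * r) - k3form H D - s, r *: H + D, - r).

Definition tau_inv (d : nat) (H : K3L) (v : mukai) : mukai :=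
  let: (r, D, s) := v in
  (- s, D + s *: H, - r - k3form H D - d%:Z * s).

Definition tau_pow (d : nat) (H : K3L) (m : int) : mukai -> mukai :=
  match m with
  | Posz k => iter k (tau d H)
  | Negz k => iter k.+1 (tau_inv d H)
  end.

(* Write a Mukai vector as (r, c H + D, s).  Then tau_d acts on (r, c, s) by an
   affine map depending on D only through x = H.D, with linear part of
   characteristic polynomial (t + 1)(t^2 + (d - 2) t + 1).  For d = 1, 2, 3 this
   map has order 6, 4, 6 whatever x is, so tau_d has that order.  Conversely, if
   tau_d^m = id then the orbit of (0, 0, -1) closes up after m steps: for d <= 3
   its exact period is 6, 4, 6, while for d >= 4 the sums r_k + r_(k+1) along
   the orbit, with alternating signs, satisfy u_(k+2) = (d - 2) u_(k+1) - u_k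
   and hence increase strictly, so the orbit never closes. *)

From mathcomp Require Import all_boot all_order all_algebra.
From mathcomp Require Import ring lra zify.
Set Implicit Arguments. Unset Strict Implicit. Unset Printing Implicit Defensive.
Import Order.TTheory GRing.Theory Num.Theory.
Local Open Scope ring_scope.

Section IterPeriod.
Variables (T : Type) (f : T -> T).

Lemma iter_can_id (g : T -> T) j :
  cancel g f -> (forall x, iter j f x = x) -> forall x, iter j g x = x.
Proof.
move=> gK fj_id x; rewrite -[LHS]fj_id.
by elim: j {fj_id} x => [|j IHj] x //; rewrite (iterSr _ f) iterS gK IHj.
Qed.

Variable p : nat.
Hypothesis iter_p_id : forall x, iter p f x = x.

Lemma iter_modn m x : iter m f x = iter (m %% p) f x.
Proof. by rewrite {1}(divn_eq m p) iterD iterM iter_fix. Qed.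

Lemma iter_dvdn_id m x : (p %| m)%N -> iter m f x = x.
Proof. by move=> /dvdnP[q ->]; rewrite iterM iter_fix. Qed.

Lemma dvdn_iter_fixed m x : (0 < p)%N ->
  (forall j, (0 < j < p)%N -> iter j f x <> x) -> iter m f x = x -> (p %| m)%N.
Proof.
move=> p_gt0 x_aper; rewrite iter_modn /dvdn.
have [-> //|m_gt0 fix_x] := posnP (m %% p).
by case: (x_aper _ _ fix_x); rewrite m_gt0 ltn_pmod.
Qed.

End IterPeriod.

Lemma chebyshev_increasing (a : int) (u : nat -> int) : 2 <= a ->
  (forall k, u k.+2 = a * u k.+1 - u k) -> 0 <= u 0%N < u 1%N ->
  forall k, 0 <= u k < u k.+1.
Proof.
move=> a_ge2 u_rec u01; elim=> [//|k /andP[uk_ge0 uk_lt]].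
have : u k.+1 <= (a - 1) * u k.+1 by rewrite -subr_ge0; nia.
rewrite u_rec; lia.
Qed.

Lemma k3formDr (H u w : K3L) : k3form H (u + w) = k3form H u + k3form H w.
Proof. by rewrite /k3form linearD /= mulmxDr mxE. Qed.

Lemma k3formZr (H u : K3L) (a : int) : k3form H (a *: u) = a * k3form H u.
Proof. by rewrite /k3form linearZ /= -scalemxAr mxE. Qed.

Lemma k3form0r (H : K3L) : k3form H 0 = 0.
Proof. by rewrite -(scale0r 0) k3formZr mul0r. Qed.

Definition tau_coord (d x : int) (t : int * int * int) : int * int * int :=
  let: (r, c, s) := t in (- (d * r) - (2 * d * c + x) - s, r + c, - r).

Definition mukai_of (H D : K3L) (t : int * int * int) : mukai :=
  let: (r, c, s) := t in (r, c *: H + D, s).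

Section Tau.
Variables (d : nat) (H : K3L).
Hypothesis HH : k3form H H = 2 * d%:Z.

Lemma tau_invK : cancel (tau_inv d H) (tau d H).
Proof.
case=> [[r D] s] /=; rewrite k3formDr k3formZr HH.
by congr (_, _, _); [ring | rewrite scaleNr addrC addrK | exact: opprK].
Qed.

Lemma tauK : cancel (tau d H) (tau_inv d H).
Proof.
case=> [[r D] s] /=; rewrite k3formDr k3formZr HH scaleNr addrAC subrr add0r.
by congr (_, _, _); ring.
Qed.

Lemma tau_pow_id (m : int) :
  (forall v, tau_pow d H m v = v) <-> (forall v, iter `|m|%N (tau d H) v = v).
Proof.
by case: m => // k; split; [exact: (iter_can_id (j := k.+1) tauK) |
                             exact: (iter_can_id (j := k.+1) tau_invK)].
Qed.

Lemma tau_mukai_of D t :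
  tau d H (mukai_of H D t) = mukai_of H D (tau_coord d%:Z (k3form H D) t).
Proof.
case: t => [[r c] s] /=; rewrite k3formDr k3formZr HH scalerDl addrA.
by congr (_, _, _); ring.
Qed.

Lemma iter_tau_mukai_of D k t :
  iter k (tau d H) (mukai_of H D t) =
  mukai_of H D (iter k (tau_coord d%:Z (k3form H D)) t).
Proof. by elim: k => //= k ->; rewrite tau_mukai_of. Qed.

Lemma mukai_ofE (v : mukai) : v = mukai_of H v.1.2 (v.1.1, 0, v.2).
Proof. by case: v => [[r D] s] /=; rewrite scale0r add0r. Qed.

Lemma mukai_of0_inj : (0 < d)%N -> injective (mukai_of H 0).
Proof.
move=> d_gt0 [[r c] s] [[r' c'] s'] /= [-> eq_cH ->]; congr (_, _, _).
have := congr1 (k3form H) eq_cH; rewrite !addr0 !k3formZr HH => /mulIf.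
by apply; lia.
Qed.

End Tau.

Definition tau_order (d : nat) : nat := (if d == 2 then 4 else 6)%N.

Lemma iter_tau_coord_order (d : nat) x : (0 < d <= 3)%N ->
  forall t, iter (tau_order d) (tau_coord d%:Z x) t = t.
Proof.
case: d => [|[|[|[|d]]]] //= _ [[r c] s]; rewrite /tau_coord /=.
all: by congr (_, _, _); ring.
Qed.

Lemma iter_tau_order (d : nat) (H : K3L) : k3form H H = 2 * d%:Z ->
  (0 < d <= 3)%N -> forall v, iter (tau_order d) (tau d H) v = v.
Proof.
move=> HH d_small v.
by rewrite (mukai_ofE H v) iter_tau_mukai_of // iter_tau_coord_order.
Qed.

Lemma tau_coord_orbit_order (d m : nat) : (0 < d <= 3)%N ->
  iter m (tau_coord d%:Z 0) (0, 0, -1) = (0, 0, -1) -> (tau_order d %| m)%N.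
Proof.
move=> d_small; apply: (dvdn_iter_fixed (iter_tau_coord_order 0 d_small)) => //.
  by case: d d_small => [|[|[|[|d]]]] // _.
by case: d d_small => [|[|[|[|d]]]] // _ [|[|[|[|[|[|j]]]]]].
Qed.

(* [1 + tau] kills the eigenvalue [-1] of [tau_coord d 0], whose characteristic
   polynomial is [(t + 1) (t^2 + (d - 2) t + 1)]. *)
Definition rank_sum (d : int) (t : int * int * int) : int :=
  t.1.1 + (tau_coord d 0 t).1.1.

Lemma rank_sum_rec (d : int) t :
  rank_sum d (tau_coord d 0 (tau_coord d 0 t))
  + (d - 2) * rank_sum d (tau_coord d 0 t) + rank_sum d t = 0.
Proof. by case: t => [[r c] s]; rewrite /rank_sum /=; ring. Qed.

Lemma tau_coord_aperiodic (d m : nat) : (4 <= d)%N -> (0 < m)%N ->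
  iter m (tau_coord d%:Z 0) (0, 0, -1) <> (0, 0, -1).
Proof.
move=> d_ge4 m_gt0 fix_e.
pose u k := (-1) ^+ k * rank_sum d (iter k (tau_coord d%:Z 0) (0, 0, -1)).
have u_rec k : u k.+2 = (d%:Z - 2) * u k.+1 - u k.
  have := rank_sum_rec d (iter k (tau_coord d%:Z 0) (0, 0, -1)).
  rewrite /u !exprS -!iterS; lia.
have u_incr k : u k < u k.+1.
  have a_ge2 : 2 <= d%:Z - 2 by lia.
  have u01 : 0 <= u 0%N < u 1%N by rewrite /u /rank_sum /=; lia.
  by case/andP: (chebyshev_increasing a_ge2 u_rec u01 k).
have : u 0%N < u m by exact: (homo_ltn lt_trans u_incr m_gt0).
rewrite /u fix_e /rank_sum /= -[(-1) ^+ m]signr_odd; case: (odd m) => /=; lia.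
Qed.

Lemma iter_tau_coord_id (d m : nat) (H : K3L) t :
  (0 < d)%N -> k3form H H = 2 * d%:Z -> (forall v, iter m (tau d H) v = v) ->
  iter m (tau_coord d%:Z 0) t = t.
Proof.
move=> d_gt0 HH tau_m_id; apply: (mukai_of0_inj HH d_gt0).
by rewrite -[in RHS](tau_m_id (mukai_of H 0 t)) iter_tau_mukai_of // k3form0r.
Qed.

Lemma iter_tau_id (d m : nat) (H : K3L) :
  (0 < d)%N -> k3form H H = 2 * d%:Z -> (0 < m)%N ->
  (forall v, iter m (tau d H) v = v) <-> (d <= 3)%N && (tau_order d %| m)%N.
Proof.
move=> d_gt0 HH m_gt0; split=> [tau_m_id | /andP[d_le3 order_dvd] v].
- have e_fixed := iter_tau_coord_id (0, 0, -1) d_gt0 HH tau_m_id.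
  have [d_le3 | d_ge4] := leqP d 3; last by case: (tau_coord_aperiodic d_ge4 m_gt0).
  by rewrite (tau_coord_orbit_order _ e_fixed) // d_gt0.
- by apply: iter_dvdn_id order_dvd; apply: iter_tau_order; rewrite ?d_gt0.
Qed.

Lemma dvdn_absz_mul (c : nat) (n : int) : n != 0 ->
  (c %| `|n|)%N <-> exists k : int, k != 0 /\ n = c%:Z * k.
Proof.
move=> n_neq0; split=> [/(@dvdzP c) [k nE] | [k [_ ->]]].
  exists k; rewrite nE mulrC; split=> //.
  by apply: contraNneq n_neq0 => k0; rewrite nE k0 mul0r.
by rewrite abszM dvdn_mulr.
Qed.

Theorem theoremA9 (d : nat) (H : K3L) (n : int) :
  (0 < d)%N -> k3form H H = 2 * d%:Z -> n != 0 ->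
  ((forall v : mukai, tau_pow d H (2 * n) v = v) <->
   exists k : int, k != 0 /\
     [\/ (d = 1%N /\ n = 3 * k), (d = 2%N /\ n = 2 * k) | (d = 3%N /\ n = 3 * k)]).
Proof.
move=> d_gt0 HH n_neq0.
rewrite tau_pow_id // abszM (_ : `|2%R|%N = 2%N) //.
rewrite iter_tau_id ?muln_gt0 ?absz_gt0 //.
case: d d_gt0 HH => [|[|[|[|d]]]] // _ _; rewrite /tau_order /=.
- rewrite -[6%N]/(2 * 3)%N dvdn_pmul2l // dvdn_absz_mul //.
  by split=> [[k [k0 ->]]|[k [k0 [[_ ->]|[]|[]]]]] //;
    exists k; split=> //; apply: Or31.
- rewrite -[4%N]/(2 * 2)%N dvdn_pmul2l // dvdn_absz_mul //.
  by split=> [[k [k0 ->]]|[k [k0 [[]|[_ ->]|[]]]]] //;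
    exists k; split=> //; apply: Or32.
- rewrite -[6%N]/(2 * 3)%N dvdn_pmul2l // dvdn_absz_mul //.
  by split=> [[k [k0 ->]]|[k [k0 [[]|[]|[_ ->]]]]] //;
    exists k; split=> //; apply: Or33.
- by split=> // [[k [_ [[]|[]|[]]]]].
Qed.
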